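(* In the Karma DPG, let $(\mu^*,\pi^* )$ be a Stationary Nash Equilibrium satisfying the action-gap condition: for every $x\in\mathcal{X}$ there is a unique maximizer $\pi^*(x)$ of $a\mapsto Q^*[x,a](s^* )$ and $$\delta:=\min_{x\in\mathcal{X}}\Big(Q^*[x,\pi^*(x)](s^* )-\max_{a\ne\pi^*(x)}Q^*[x,a](s^* )\Big)>0,\quad s^*=(\mu^*,\pi^* ).$$ Suppose $N>2C_{MF}/\delta$. Then for every $\tilde\mu^{agent}\in\mathcal{M}$ and $\tilde\pi\in\Pi$, with $\tilde s=\big(\tfrac{N-1}{N}\mu^*+\tfrac1N\tilde\mu^{agent},\ \tfrac{N-1}{N}\pi^*+\tfrac1N\tilde\pi\big)$, for every $x\in\mathcal{X}$ the action $\pi^*(x)$ is the unique maximizer of $a\mapsto Q^*[x,a](\tilde s)$; i.e. the optimal (greedy) policy of the MDP with mean field $\tilde s$ coincides with that at $s^*$.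
   Context: Karma DPG as follows. $\mathcal{U}\subset\mathbb{R}_{>0}$ finite, $K\in\mathbb{N}$, $\mathcal{X}=\mathcal{U}\times\{0,\dots,K\}$, actions $\mathcal{A}[k]=\{0,\dots,k\}$ in state $(u,k)$, discount $\alpha\in[0,1)$. $\mathcal{M}=\Delta(\mathcal{X})$, $\Pi$ the set of stationary policies; $\mathcal{M}\times\Pi$ carries a fixed norm $\|\cdot\|$. Reward $r[(u,k),a](\mu,\pi)=u\,\gamma[\texttt{win}\mid a](\mu,\pi)$ with $\gamma[\texttt{win}\mid a]=\sum_{(u',k')}\sum_{a'}\mu[u',k']\pi[a'\mid u',k']\mathbb{P}[\texttt{win}\mid a,a']$, $\mathbb{P}[\texttt{win}\mid a,a']=1,0,\tfrac12$ for $a>a'$, $a<a'$, $a=a'$. Transitions $p[(u^+,k^+)\mid(u,k),a](\mu,\pi)=\phi[u^+\mid u]\kappa[k^+\mid k,a](\mu,\pi)$, $\phi$ a fixed Markov kernel on $\mathcal U$, $\kappa$ the pay-bid-to-society kernel: with $\bar p=\sum_{(u,k)}\mu[u,k]\sum_a\pi[a\mid u,k]\gamma[\texttt{win}\mid a]a$, $f^{\text{low}}=\lceil\bar p\rceil-\bar p$, $f^{\text{high}}=1-f^{\text{low}}$, a winner moves to $k-a+\lfloor\bar p\rfloor$ w.p. $f^{\text{low}}$ and to $k-a+\lceil\bar p\rceil$ w.p. $f^{\text{high}}$; a loser (prob. $1-\gamma[\texttt{win}\mid a]$) moves to $k+\lfloor\bar p\rfloor$ w.p. $f^{\text{low}}$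 and $k+\lceil\bar p\rceil$ w.p. $f^{\text{high}}$. $L_r,L_p$ are Lipschitz constants of $r,p$ in $s=(\mu,\pi)$ (sup over entries), $R_{\max}=\sup_{s,x,a}|r[x,a](s)|$, $C_0=\sup_{s,s'\in\mathcal{M}\times\Pi}\|s-s'\|$, $C_{MF}=\frac{(1-\alpha)L_r+\alpha R_{\max}|\mathcal{X}|L_p}{(1-\alpha)^2}C_0$. $Q^*[\cdot,\cdot](s)$ is the optimal Q-function of the MDP with reward $r[\cdot](s)$, transitions $p[\cdot](s)$, discount $\alpha$ (unique fixed point of $Q\mapsto r(s)+\alpha\sum_{x'}p[x'\mid\cdot](s)\max_{a'}Q[x',a']$). A Stationary Nash Equilibrium is a pair $(\mu^*,\pi^* )$ with $\mu^*[x]=\sum_{x^-,a^-}\mu^*[x^-]\pi^*[a^-\mid x^-]p[x\mid x^-,a^-](\mu^*,\pi^* )$ for all $x$ and $\pi^*[\cdot\mid x]$ supported on $\arg\max_a Q^*[x,a](\mu^*,\pi^* )$ for all $x$. *)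

From HB Require Import structures.
From mathcomp Require Import all_boot all_order all_algebra.
From mathcomp Require Import reals.
Set Implicit Arguments. Unset Strict Implicit. Unset Printing Implicit Defensive.
Import Order.TTheory GRing.Theory Num.Theory.
Local Open Scope ring_scope.

(* U = {u 0, ..., u (n-1)} (u injective, positive),
   X = 'I_n * 'I_K.+1  (state (i,k) <-> (u i, k)),
   actions are encoded in 'I_K.+1; the admissible ones in state (i,k)
   are those a with a <= k.
   A mean field / policy pair s = (mu, pi) is a pair of finite functions
   mu : {ffun X -> R}, pi : {ffun X * 'I_K.+1 -> R}  (pi (x,a) = pi[a|x]). *)

Notation stT n K := ('I_n * 'I_K.+1)%type.
Notation actT K := 'I_K.+1.
Notation mfT R n K := {ffun ('I_n * 'I_K.+1) -> R}.
Notation polT R n K := {ffun (('I_n * 'I_K.+1) * 'I_K.+1) -> R}.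

Section Karma.
Variables (R : realType) (n K : nat).

Local Notation stT := (stT n K).
Local Notation actT := (actT K).
Local Notation mfT := (mfT R n K).
Local Notation polT := (polT R n K).

Definition adm (x : stT) (a : actT) : bool := (a <= x.2)%N.

Definition in_M (mu : mfT) : Prop :=
  (forall x, 0 <= mu x) /\ \sum_(x : stT) mu x = 1.

Definition in_Pi (pi : polT) : Prop :=
  (forall x a, 0 <= pi (x, a)) /\ (forall x a, ~~ adm x a -> pi (x, a) = 0) /\
  (forall x, \sum_(a : actT) pi (x, a) = 1).

Definition Pwin (a a' : actT) : R :=
  if (a' < a)%N then 1 else if (a < a')%N then 0 else 2^-1.

Definition gamma_win (mu : mfT) (pi : polT) (a : actT) : R :=
  \sum_(x' : stT) \sum_(a' : actT) mu x' * pi (x', a') * Pwin a a'.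

Definition reward (u : 'I_n -> R) (mu : mfT) (pi : polT) (x : stT) (a : actT) : R :=
  u x.1 * gamma_win mu pi a.

Definition pbar (mu : mfT) (pi : polT) : R :=
  \sum_(x : stT) mu x * \sum_(a : actT) pi (x, a) * gamma_win mu pi a * (nat_of_ord a)%:R.

Definition f_low (mu : mfT) (pi : polT) : R :=
  (Num.ceil (pbar mu pi))%:~R - pbar mu pi.
Definition f_high (mu : mfT) (pi : polT) : R := 1 - f_low mu pi.

(* pay-bid-to-society karma kernel kappa[k+ | k, a](mu, pi) for k+ in {0..K}:
   the probability that the next karma equals k+. *)
Definition kappa (mu : mfT) (pi : polT) (k : 'I_K.+1) (a : actT) (kp : 'I_K.+1) : R :=
  let fl := Num.floor (pbar mu pi) in
  let cl := Num.ceil (pbar mu pi) in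
  let g := gamma_win mu pi a in
  let ind (z : int) : R := if (Posz kp == z) then 1 else 0 in
  g * (f_low mu pi * ind (Posz k - Posz a + fl) + f_high mu pi * ind (Posz k - Posz a + cl))
  + (1 - g) * (f_low mu pi * ind (Posz k + fl) + f_high mu pi * ind (Posz k + cl)).

Definition trans (phi : 'I_n -> 'I_n -> R) (mu : mfT) (pi : polT)
  (xp : stT) (x : stT) (a : actT) : R :=
  phi x.1 xp.1 * kappa mu pi x.2 a xp.2.

(* maximum of Q[x', .] over the admissible actions A[k'] (nonempty: contains 0) *)
Definition maxQ (Q : stT -> actT -> R) (x : stT) : R :=
  \big[Num.max/Q x ord0]_(a : actT | adm x a) Q x a.

Definition is_Qstar (u : 'I_n -> R) (phi : 'I_n -> 'I_n -> R) (alpha : R)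
  (mu : mfT) (pi : polT) (Q : stT -> actT -> R) : Prop :=
  forall x a, adm x a ->
    Q x a = reward u mu pi x a
            + alpha * \sum_(xp : stT) trans phi mu pi xp x a * maxQ Q xp.

Definition is_SNE (u : 'I_n -> R) (phi : 'I_n -> 'I_n -> R) (alpha : R)
  (mu : mfT) (pi : polT) (Q : stT -> actT -> R) : Prop :=
  in_M mu /\ in_Pi pi /\
  (forall x, mu x = \sum_(xm : stT) \sum_(am : actT) mu xm * pi (xm, am) * trans phi mu pi x xm am) /\
  (forall x a, 0 < pi (x, a) -> adm x a /\ Q x a = maxQ Q x).

Definition s_sub (s s' : mfT * polT) : mfT * polT := (s.1 - s'.1, s.2 - s'.2).

Definition is_norm (nrm : mfT * polT -> R) : Prop :=
  (forall v : mfT * polT, nrm v = 0 -> v = (0, 0)) /\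
  (forall (c : R) (v : mfT * polT), nrm ([ffun x => c * v.1 x], [ffun y => c * v.2 y]) = `|c| * nrm v) /\
  (forall v w : mfT * polT, nrm (v.1 + w.1, v.2 + w.2) <= nrm v + nrm w).

End Karma.

From HB Require Import structures.
From mathcomp Require Import all_boot all_order all_algebra.
From mathcomp Require Import reals.
From mathcomp Require Import ring lra.
Set Implicit Arguments. Unset Strict Implicit. Unset Printing Implicit Defensive.
Import Order.TTheory GRing.Theory Num.Theory.
Local Open Scope ring_scope.

(** The optimal Q-function is the fixed point of a Bellman operator that is an
    [alpha]-contraction in the sup norm, so it is bounded by [Rmax / (1 - alpha)]
    and depends Lipschitz-continuously on the reward and the transitions:
    moving the mean field by [d] moves [Q*] by at most [C_MF / C0 * d].
    One agent deviating in a population of [N] moves the mean field by at most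
    [C0 / N], hence [Q*] by less than [delta / 2] when [N > 2 C_MF / delta];
    an action gap of [delta] at the equilibrium therefore survives. *)

Section WeightedSums.
Variables (R : realDomainType) (T : finType).

Lemma norm_sum_substoch_le (p m : T -> R) B :
  (forall t, 0 <= p t) -> \sum_t p t <= 1 -> 0 <= B -> (forall t, `|m t| <= B) ->
  `|\sum_t p t * m t| <= B.
Proof.
move=> p_ge0 p_le1 B_ge0 m_le; apply: le_trans (ler_norm_sum _ _ _) _.
apply: (@le_trans _ _ (\sum_t p t * B)).
  by apply: ler_sum => t _; rewrite normrM ger0_norm // ler_wpM2l.
by rewrite -mulr_suml ler_piMl.
Qed.

Lemma norm_sum_le_card (q m : T -> R) c B :
  (forall t, `|q t| <= c) -> (forall t, `|m t| <= B) ->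
  `|\sum_t q t * m t| <= #|{: T}|%:R * (c * B).
Proof.
move=> q_le m_le; apply: le_trans (ler_norm_sum _ _ _) _.
apply: (@le_trans _ _ (\sum_(t : T) c * B)); last by rewrite sumr_const mulr_natl.
by apply: ler_sum => t _; rewrite normrM ler_pM // (le_trans _ (q_le t)).
Qed.

End WeightedSums.

Lemma le_div_contraction (R : realFieldType) (M c k : R) :
  k < 1 -> M <= c + k * M -> M <= c / (1 - k).
Proof. by move=> k_lt1 M_le; rewrite ler_pdivlMr; lra. Qed.

Lemma convex_itv01 (R : realDomainType) (t x y : R) :
  0 <= t <= 1 -> 0 <= x <= 1 -> 0 <= y <= 1 -> 0 <= t * x + (1 - t) * y <= 1.
Proof.
move=> /andP[t0 t1] /andP[x0 x1] /andP[y0 y1].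
have t'0 : 0 <= 1 - t by lra.
have := mulr_ge0 t0 x0; have := mulr_ge0 t'0 y0.
have := ler_piMr t0 x1; have := ler_piMr t'0 y1; lra.
Qed.

Definition substochastic (R : realDomainType) (n K : nat)
    (p : stT n K -> stT n K -> actT K -> R) : Prop :=
  (forall xp x a, 0 <= p xp x a) /\ (forall x a, \sum_xp p xp x a <= 1).

Section KarmaKernel.
Variables (R : realType) (n K : nat).
Implicit Types (mu : mfT R n K) (pi : polT R n K).

Lemma Pwin_itv (a a' : actT K) : 0 <= Pwin R a a' <= 1.
Proof. by rewrite /Pwin; do 2?case: ifP => _; lra. Qed.

Lemma gamma_win_itv mu pi a : in_M mu -> in_Pi pi -> 0 <= gamma_win mu pi a <= 1.
Proof.
move=> [mu_ge0 mu_sum] [pi_ge0 [_ pi_sum]]; apply/andP; split.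
  apply: sumr_ge0 => x _; apply: sumr_ge0 => a' _.
  by have /andP[+ _] := Pwin_itv a a'; apply: mulr_ge0; apply: mulr_ge0.
rewrite -mu_sum; apply: ler_sum => x _.
apply: (@le_trans _ _ (\sum_a' mu x * pi (x, a'))); last by rewrite -mulr_sumr pi_sum mulr1.
apply: ler_sum => a' _; have /andP[_ P1] := Pwin_itv a a'.
by rewrite ler_piMr // mulr_ge0.
Qed.

Lemma f_low_itv mu pi : 0 <= f_low mu pi <= 1.
Proof.
rewrite /f_low; have := ceil_itv (pbar mu pi); rewrite intrB.
move: (pbar mu pi) ((Num.ceil _)%:~R : R) => p c; lra.
Qed.

Lemma sum_indicator_itv (z : int) :
  0 <= \sum_(kp : 'I_K.+1) (if Posz kp == z then 1 else 0 : R) <= 1.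
Proof.
rewrite sumr_ge0 /=; last by move=> k _; case: eqP.
case: (pickP (fun kp : 'I_K.+1 => Posz kp == z)) => [k0 /eqP k0z | no_kp]; last first.
  by rewrite big1 ?ler01 // => k _; rewrite no_kp.
rewrite (bigD1 k0) //= -k0z eqxx big1 ?addr0 // => k k_k0.
by case: eqP => // -[/val_inj kk0]; rewrite kk0 eqxx in k_k0.
Qed.

(* Instantiated with the indicators in [kappa] and with their sums over [kp]. *)
Lemma kappa_mixture_itv mu pi a (s1 s2 s3 s4 : R) :
  in_M mu -> in_Pi pi ->
  0 <= s1 <= 1 -> 0 <= s2 <= 1 -> 0 <= s3 <= 1 -> 0 <= s4 <= 1 ->
  0 <= gamma_win mu pi a * (f_low mu pi * s1 + f_high mu pi * s2)
       + (1 - gamma_win mu pi a) * (f_low mu pi * s3 + f_high mu pi * s4) <= 1.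
Proof.
move=> hM hP s1_itv s2_itv s3_itv s4_itv.
have fl_itv := f_low_itv mu pi.
by apply: convex_itv01; [exact: gamma_win_itv | |]; apply: convex_itv01.
Qed.

Lemma kappa_ge0 mu pi k a kp : in_M mu -> in_Pi pi -> 0 <= kappa mu pi k a kp.
Proof.
move=> hM hP; have ind_itv (z : int) : 0 <= (if Posz kp == z then 1 else 0 : R) <= 1.
  by case: eqP; lra.
exact: (proj1 (andP (kappa_mixture_itv a hM hP (ind_itv _) (ind_itv _) (ind_itv _) (ind_itv _)))).
Qed.

Lemma sum_kappa_le1 mu pi k a : in_M mu -> in_Pi pi -> \sum_kp kappa mu pi k a kp <= 1.
Proof.
move=> hM hP; rewrite /kappa big_split /= -!mulr_sumr !big_split /= -!mulr_sumr.
exact: (proj2 (andP (kappa_mixture_itv a hM hP (sum_indicator_itv _)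
  (sum_indicator_itv _) (sum_indicator_itv _) (sum_indicator_itv _)))).
Qed.

Lemma trans_substochastic (phi : 'I_n -> 'I_n -> R) mu pi :
  (forall i j, 0 <= phi i j) -> (forall i, \sum_j phi i j = 1) ->
  in_M mu -> in_Pi pi -> substochastic (trans phi mu pi).
Proof.
move=> phi_ge0 phi_sum hM hP; split=> [xp x a|x a].
  by rewrite /trans mulr_ge0 // kappa_ge0.
rewrite /trans -(pair_bigA _ (fun i k => phi x.1 i * kappa mu pi x.2 a k)) /=.
under eq_bigr do rewrite -mulr_sumr.
by rewrite -mulr_suml phi_sum mul1r sum_kappa_le1.
Qed.

End KarmaKernel.

Section BellmanFixpoint.
Variables (R : realType) (n K : nat) (alpha : R).
Hypotheses (alpha_ge0 : 0 <= alpha) (alpha_lt1 : alpha < 1).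

Local Notation stT := (stT n K).
Local Notation actT := (actT K).

Definition bellman_fixpoint (r : stT -> actT -> R) (p : stT -> stT -> actT -> R)
    (Q : stT -> actT -> R) : Prop :=
  forall x a, adm x a -> Q x a = r x a + alpha * \sum_xp p xp x a * maxQ Q xp.

Lemma maxQ_le (Q1 Q2 : stT -> actT -> R) x B :
  (forall a, adm x a -> Q1 x a <= Q2 x a + B) -> maxQ Q1 x <= maxQ Q2 x + B.
Proof.
have maxQ_ge a : adm x a -> Q2 x a <= maxQ Q2 x by move=> xa; exact: le_bigmax_cond.
move=> Q12; apply: bigmax_le => [|a xa]; apply: le_trans (Q12 _ _) _;
  by rewrite ?lerD2r ?maxQ_ge // /adm.
Qed.

Lemma norm_maxQ_sub_le (Q1 Q2 : stT -> actT -> R) x B :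
  (forall a, adm x a -> `|Q1 x a - Q2 x a| <= B) -> `|maxQ Q1 x - maxQ Q2 x| <= B.
Proof.
move=> Q12; have [Q1_le Q2_le] : (forall a, adm x a -> Q1 x a <= Q2 x a + B)
                              /\ (forall a, adm x a -> Q2 x a <= Q1 x a + B).
  by split=> a /Q12; rewrite ler_norml; lra.
by have := maxQ_le Q1_le; have := maxQ_le Q2_le; rewrite ler_norml; lra.
Qed.

Lemma norm_maxQ_le (Q : stT -> actT -> R) x B :
  (forall a, adm x a -> `|Q x a| <= B) -> `|maxQ Q x| <= B.
Proof.
move=> QB; have Q_itv a : adm x a -> - B <= Q x a <= B by move/QB; rewrite ler_norml.
have /andP[Q0_ge Q0_le] := Q_itv ord0 isT.
rewrite ler_norml (le_trans Q0_ge (bigmax_ge_id _ _ _ _)) /=.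
by apply: bigmax_le => // a /Q_itv /andP[].
Qed.

Let supQ (Q : stT -> actT -> R) : R := \big[Num.max/0]_(xa | adm xa.1 xa.2) `|Q xa.1 xa.2|.

Let supQ_ge0 Q : 0 <= supQ Q.
Proof. exact: bigmax_ge_id. Qed.

Let le_supQ Q x a : adm x a -> `|Q x a| <= supQ Q.
Proof. by move=> xa; rewrite /supQ (bigmaxD1 (x, a)) // le_max lexx. Qed.

Let supQ_le_contraction Q (c : R) :
  0 <= c -> (forall x a, adm x a -> `|Q x a| <= c + alpha * supQ Q) ->
  supQ Q <= c / (1 - alpha).
Proof.
move=> c_ge0 Qc; apply: le_div_contraction => //.
apply: bigmax_le => [|[x a] /= /Qc //].
by rewrite addr_ge0 // mulr_ge0.
Qed.

Lemma bellman_fixpoint_norm_le r p Q (Rm : R) :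
  (forall x a, adm x a -> `|r x a| <= Rm) -> substochastic p ->
  bellman_fixpoint r p Q -> forall x a, adm x a -> `|Q x a| <= Rm / (1 - alpha).
Proof.
move=> r_le [p_ge0 p_sum] Qfix x a xa.
have Rm_ge0 : 0 <= Rm := le_trans (normr_ge0 _) (r_le x a xa).
apply: le_trans (le_supQ Q xa) _; apply: supQ_le_contraction => // y b yb.
rewrite Qfix //; apply: le_trans (ler_normD _ _) _; apply: lerD; first exact: r_le.
rewrite normrM ger0_norm // ler_wpM2l //.
apply: norm_sum_substoch_le => // xp.
by apply: norm_maxQ_le => c /(le_supQ Q).
Qed.

Lemma bellman_fixpoint_lipschitz r1 p1 Q1 r2 p2 Q2 (er ep B : R) :
  (forall x a, adm x a -> `|r1 x a - r2 x a| <= er) ->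
  (forall xp x a, adm x a -> `|p1 xp x a - p2 xp x a| <= ep) ->
  (forall x a, adm x a -> `|Q2 x a| <= B) -> substochastic p1 ->
  bellman_fixpoint r1 p1 Q1 -> bellman_fixpoint r2 p2 Q2 ->
  forall x a, adm x a ->
  `|Q1 x a - Q2 x a| <= (er + alpha * (#|{: stT}|%:R * (ep * B))) / (1 - alpha).
Proof.
move=> r12 p12 Q2B [p1_ge0 p1_sum] Q1fix Q2fix x a xa.
have er_ge0 : 0 <= er := le_trans (normr_ge0 _) (r12 x a xa).
have ep_ge0 : 0 <= ep := le_trans (normr_ge0 _) (p12 x x a xa).
have B_ge0 : 0 <= B := le_trans (normr_ge0 _) (Q2B x a xa).
pose Q12 y b := Q1 y b - Q2 y b.
apply: le_trans (le_supQ Q12 xa) _; apply: supQ_le_contraction => [|y b yb].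
  by rewrite addr_ge0 // !mulr_ge0.
rewrite /Q12 Q1fix // Q2fix //.
set P1 := \sum_xp p1 xp y b * _; set P2 := \sum_xp p2 xp y b * _.
have -> : r1 y b + alpha * P1 - (r2 y b + alpha * P2)
        = (r1 y b - r2 y b) + alpha * (P1 - P2) by ring.
(* Split the continuation difference into a change of Q and a change of p. *)
have -> : P1 - P2 = \sum_xp p1 xp y b * (maxQ Q1 xp - maxQ Q2 xp)
                   + \sum_xp (p1 xp y b - p2 xp y b) * maxQ Q2 xp.
  by rewrite -big_split -sumrB; apply: eq_bigr => xp _ /=; ring.
apply: le_trans (ler_normD _ _) _; rewrite -addrA; apply: lerD; first exact: r12.
rewrite normrM ger0_norm // -mulrDr ler_wpM2l //.
apply: le_trans (ler_normD _ _) _; rewrite [leRHS]addrC; apply: lerD.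
  apply: norm_sum_substoch_le (supQ_ge0 Q12) _ => // xp.
  by apply: norm_maxQ_sub_le => c /(le_supQ Q12).
apply: norm_sum_le_card => [xp|xp]; first exact: p12.
by apply: norm_maxQ_le => c /Q2B.
Qed.

End BellmanFixpoint.

Section Mixtures.
Variables (R : realType) (n K : nat) (c1 c2 : R).
Hypotheses (c1_ge0 : 0 <= c1) (c2_ge0 : 0 <= c2) (c12 : c1 + c2 = 1).
Implicit Types (mu : mfT R n K) (pi : polT R n K).

Definition mix_mf mu mu' : mfT R n K := [ffun x => c1 * mu x + c2 * mu' x].
Definition mix_pol pi pi' : polT R n K := [ffun y => c1 * pi y + c2 * pi' y].

Lemma in_M_mix mu mu' : in_M mu -> in_M mu' -> in_M (mix_mf mu mu').
Proof.
move=> [mu_ge0 mu_sum] [mu'_ge0 mu'_sum]; split=> [x|].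
  by rewrite ffunE addr_ge0 // mulr_ge0.
under eq_bigr do rewrite ffunE.
by rewrite big_split /= -!mulr_sumr mu_sum mu'_sum !mulr1.
Qed.

Lemma in_Pi_mix pi pi' : in_Pi pi -> in_Pi pi' -> in_Pi (mix_pol pi pi').
Proof.
move=> [pi_ge0 [pi_adm pi_sum]] [pi'_ge0 [pi'_adm pi'_sum]]; split; [|split].
- by move=> x a; rewrite ffunE addr_ge0 // mulr_ge0.
- by move=> x a xa; rewrite ffunE pi_adm // pi'_adm // !mulr0 addr0.
- move=> x; under eq_bigr do rewrite ffunE.
  by rewrite big_split /= -!mulr_sumr pi_sum pi'_sum !mulr1.
Qed.

Lemma nrm_mix_sub (nrm : mfT R n K * polT R n K -> R) mu pi mu' pi' : is_norm nrm ->
  nrm (s_sub (mix_mf mu mu', mix_pol pi pi') (mu, pi)) = c2 * nrm (s_sub (mu', pi') (mu, pi)).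
Proof.
move=> [_ [nrmZ _]]; rewrite -(ger0_norm c2_ge0) -nrmZ.
have c1E : c1 = 1 - c2 by rewrite -c12 addrK.
by congr nrm; congr pair; apply/ffunP => y; rewrite !ffunE c1E; ring.
Qed.

End Mixtures.

Lemma action_gap_stable (R : realFieldType) (n K : nat) (Q Q' : stT n K -> actT K -> R)
    (astar : stT n K -> actT K) (delta eps : R) :
  (forall x, adm x (astar x)) ->
  (forall x a, adm x a -> a != astar x -> Q x a <= Q x (astar x) - delta) ->
  (forall x a, adm x a -> `|Q' x a - Q x a| <= eps) -> 2 * eps < delta ->
  forall x a, adm x a -> a != astar x -> Q' x a < Q' x (astar x).
Proof.
move=> astar_adm gap QQ' eps_lt x a xa a_ne.
have := QQ' x a xa; have := QQ' x (astar x) (astar_adm x); have := gap x a xa a_ne.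
by rewrite !ler_norml; lra.
Qed.

(* The last hypothesis is [N > 2 C_MF / delta]. *)
Lemma bellman_error_lt_half_gap (R : realFieldType) (alpha Lr Lp Rm X C0 d delta : R) (N : nat) :
  0 <= alpha -> alpha < 1 -> 0 <= Lr -> 0 <= Lp -> 0 <= Rm -> 0 <= X ->
  0 < delta -> (0 < N)%N -> d <= N%:R^-1 * C0 ->
  2 * ((((1 - alpha) * Lr + alpha * Rm * X * Lp) / (1 - alpha) ^+ 2) * C0) / delta < N%:R ->
  2 * ((Lr * d + alpha * (X * (Lp * d * (Rm / (1 - alpha))))) / (1 - alpha)) < delta.
Proof.
move=> alpha_ge0 alpha_lt1 Lr_ge0 Lp_ge0 Rm_ge0 X_ge0 delta_gt0 N_gt0 d_le N_large.
have alpha'_gt0 : 0 < 1 - alpha by rewrite subr_gt0.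
have N_gt0' : 0 < N%:R :> R by rewrite ltr0n.
set C := ((1 - alpha) * Lr + alpha * Rm * X * Lp) / (1 - alpha) ^+ 2 in N_large *.
have C_ge0 : 0 <= C.
  apply: divr_ge0; last by rewrite exprn_ge0 ?ltW.
  by apply: addr_ge0; rewrite !mulr_ge0 // ltW.
have -> : (Lr * d + alpha * (X * (Lp * d * (Rm / (1 - alpha))))) / (1 - alpha) = C * d.
  by rewrite /C; field; rewrite subr_eq0 gt_eqF.
apply: le_lt_trans (_ : 2 * (C * (N%:R^-1 * C0)) < delta).
  by rewrite ler_pM2l // ler_wpM2l.
have -> : 2 * (C * (N%:R^-1 * C0)) = 2 * (C * C0) / N%:R by field; rewrite gt_eqF.
by rewrite ltr_pdivrMr // [delta * _]mulrC -ltr_pdivrMr.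
Qed.

Theorem mainTheorem4
  (R : realType) (n K : nat)
  (u : 'I_n -> R) (u_inj : injective u) (u_pos : forall i, 0 < u i)
  (phi : 'I_n -> 'I_n -> R)
  (phi_ge0 : forall i j, 0 <= phi i j) (phi_sum : forall i, \sum_(j < n) phi i j = 1)
  (alpha : R) (alpha_ge0 : 0 <= alpha) (alpha_lt1 : alpha < 1)
  (nrm : mfT R n K * polT R n K -> R) (nrm_norm : is_norm nrm)
  (Lr Lp Rmax C0 : R)
  (Lr_ge0 : 0 <= Lr) (Lp_ge0 : 0 <= Lp) (Rmax_ge0 : 0 <= Rmax)
  (Lr_lip : forall mu pi mu' pi', in_M mu -> in_Pi pi -> in_M mu' -> in_Pi pi' ->
     forall x a, adm x a ->
     `|reward u mu pi x a - reward u mu' pi' x a| <= Lr * nrm (s_sub (mu, pi) (mu', pi')))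
  (Lp_lip : forall mu pi mu' pi', in_M mu -> in_Pi pi -> in_M mu' -> in_Pi pi' ->
     forall xp x a, adm x a ->
     `|trans phi mu pi xp x a - trans phi mu' pi' xp x a|
        <= Lp * nrm (s_sub (mu, pi) (mu', pi')))
  (Rmax_bound : forall (mu : mfT R n K) (pi : polT R n K), in_M mu -> in_Pi pi -> forall x a, adm x a ->
     `|reward u mu pi x a| <= Rmax)
  (C0_bound : forall mu pi mu' pi', in_M mu -> in_Pi pi -> in_M mu' -> in_Pi pi' ->
     nrm (s_sub (mu, pi) (mu', pi')) <= C0)
  (mus : mfT R n K) (pis : polT R n K) (Qs : stT n K -> actT K -> R)
  (Qs_opt : is_Qstar u phi alpha mus pis Qs)
  (sne : is_SNE u phi alpha mus pis Qs)
  (astar : stT n K -> actT K) (astar_adm : forall x, adm x (astar x))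
  (delta : R) (delta_gt0 : 0 < delta)
  (gap : forall x a, adm x a -> a != astar x -> Qs x a <= Qs x (astar x) - delta)
  (N : nat) (N_gt0 : (0 < N)%N)
  (N_large : N%:R > 2 * ((((1 - alpha) * Lr + alpha * Rmax * (#|{: stT n K}|)%:R * Lp)
                          / (1 - alpha) ^+ 2) * C0) / delta) :
  forall (mua : mfT R n K) (pit : polT R n K), in_M mua -> in_Pi pit ->
  let mut := [ffun x => (N%:R - 1) / N%:R * mus x + N%:R^-1 * mua x] in
  let pitl := [ffun y => (N%:R - 1) / N%:R * pis y + N%:R^-1 * pit y] in
  forall Qt : stT n K -> actT K -> R, is_Qstar u phi alpha mut pitl Qt ->
  forall x a, adm x a -> a != astar x -> Qt x a < Qt x (astar x).
Proof.
move=> mua pit hMa hPa mut pitl Qt Qt_opt.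
have [hMs [hPs _]] := sne.
have N_gt0' : 0 < N%:R :> R by rewrite ltr0n.
have w_ge0 : 0 <= (N%:R - 1) / N%:R :> R by rewrite divr_ge0 // subr_ge0 ler1n.
have w'_ge0 : 0 <= N%:R^-1 :> R by rewrite invr_ge0 ltW.
have w_sum : (N%:R - 1) / N%:R + N%:R^-1 = 1 :> R by field; rewrite gt_eqF.
have hMt : in_M mut := in_M_mix w_ge0 w'_ge0 w_sum hMs hMa.
have hPt : in_Pi pitl := in_Pi_mix w_ge0 w'_ge0 w_sum hPs hPa.
set d := nrm (s_sub (mut, pitl) (mus, pis)).
have d_le : d <= N%:R^-1 * C0 by rewrite /d nrm_mix_sub // ler_wpM2l // C0_bound.
have Qs_bnd := bellman_fixpoint_norm_le alpha_ge0 alpha_lt1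
  (Rmax_bound _ _ hMs hPs) (trans_substochastic phi_ge0 phi_sum hMs hPs) Qs_opt.
have Q_err := bellman_fixpoint_lipschitz alpha_ge0 alpha_lt1
  (Lr_lip _ _ _ _ hMt hPt hMs hPs) (Lp_lip _ _ _ _ hMt hPt hMs hPs) Qs_bnd
  (trans_substochastic phi_ge0 phi_sum hMt hPt) Qt_opt Qs_opt.
apply: (action_gap_stable astar_adm gap Q_err).
exact: bellman_error_lt_half_gap alpha_ge0 alpha_lt1 Lr_ge0 Lp_ge0 Rmax_ge0
  (ler0n _ _) delta_gt0 N_gt0 d_le N_large.
Qed.
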